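(* Suppose the embedding uses one-time data encoding: $\rho_\theta(x)=U(\theta)S(x)|0\rangle\langle0|S(x)^\dagger U(\theta)^\dagger$ where $U(\theta)=\prod_{l=1}^L U_l(\theta_l)$ is unitary and $S(x)$ is a unitary encoding gate. Let $\kappa(x)=S(x)|0\rangle\langle0|S(x)^\dagger$. Then for $\mathcal A\in\{\mathcal S,\mathcal T\}$, $$\mathfrak R^{\mathcal A}_{\Theta,\mathcal M}\le\mathrm{Tr}\Bigl(\sqrt{\mathbb E_{x\sim p^{\mathcal A}(x)}[\kappa(x)^2]}\Bigr).$$
   Context: $\mathcal X$ finite, labels $c\in\{0,1\}$, $\Theta$ a parameter set, $\mathcal M$ the set of binary POVMs $M=(M_0,M_1)$ on $\mathbb C^n$ ($M_0,M_1\succeq0$, $M_0+M_1=I$), loss $\ell_{\theta,M}(c,x)=1-\mathrm{Tr}(M_c\rho_\theta(x))$. For task $\mathcal A$ with distribution $p^{\mathcal A}(c,x)$ (input marginal $p^{\mathcal A}(x)$) and sample size $N^{\mathcal A}$, let $(c_j,x_j)$ be i.i.d. from $p^{\mathcal A}$ and $\sigma_j$ i.i.d. uniform on $\{\pm1\}$ independent of data; $$\mathfrak R^{\mathcal A}_{\Theta,\mathcal M}=\mathbb E\Bigl[\sup_{\theta\in\Theta,M\in\mathcal M}\sum_{j=1}^{N^{\mathcal A}}\frac{\sigma_j\ell_{\theta,M}(c_j,x_j)}{\sqrt{N^{\mathcal A}}}\Bigr].$$ *)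

From HB Require Import structures.
From mathcomp Require Import all_boot all_order all_algebra.
From mathcomp Require Import complex.
From mathcomp Require Import boolp classical_sets reals.
Set Implicit Arguments. Unset Strict Implicit. Unset Printing Implicit Defensive.
Import Order.TTheory GRing.Theory Num.Theory.
Local Open Scope ring_scope.

Section QDefs.
Variable R : realType.
Local Notation C := R[i].

Definition cR (r : R) : C := Complex r 0.

Definition adj (m k : nat) (A : 'M[C]_(m, k)) : 'M[C]_(k, m) :=
  (map_mx (@conjc R) A)^T.

Definition unitary (n : nat) (U : 'M[C]_n) : Prop :=
  adj U *m U = 1%:M /\ U *m adj U = 1%:M.

Definition psd (n : nat) (A : 'M[C]_n) : Prop :=
  adj A = A /\ forall v : 'cV[C]_n, 0 <= (adj v *m A *m v) 0 0.

(* binary POVM (M_0, M_1) = (M false, M true) *)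
Definition binPOVM (n : nat) (M : bool -> 'M[C]_n) : Prop :=
  psd (M false) /\ psd (M true) /\ M false + M true = 1%:M.

Definition ket0 (n : nat) : 'cV[C]_n.+1 := delta_mx 0 0.
Definition proj0 (n : nat) : 'M[C]_n.+1 := ket0 n *m adj (ket0 n).

Definition kappa (n : nat) (S : 'M[C]_n.+1) : 'M[C]_n.+1 :=
  S *m proj0 n *m adj S.

Definition rho_enc (n : nat) (U S : 'M[C]_n.+1) : 'M[C]_n.+1 :=
  U *m kappa S *m adj U.

Definition Uprod (n L : nat) (P : Type) (Ul : 'I_L -> P -> 'M[C]_n.+1)
  (theta : 'I_L -> P) : 'M[C]_n.+1 :=
  \big[mulmx/1%:M]_(l < L) Ul l (theta l).

(* loss l_{theta,M}(c,x) = 1 - Tr(M_c rho) (real, taken as real part) *)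
Definition loss (n : nat) (M : bool -> 'M[C]_n.+1) (rho : 'M[C]_n.+1)
  (c : bool) : R :=
  complex.Re (1 - \tr (M c *m rho)).

Definition is_distr (X : finType) (p : bool * X -> R) : Prop :=
  (forall z, 0 <= p z) /\ \sum_(z : bool * X) p z = 1.

Definition marginal (X : finType) (p : bool * X -> R) (x : X) : R :=
  p (false, x) + p (true, x).

(* empirical Rademacher complexity averaged over data and signs;
   sigma_j = +1 iff s j = true *)
Definition rademacher (n L N : nat) (P : Type) (X : finType)
  (p : bool * X -> R) (Theta : set ('I_L -> P))
  (Ul : 'I_L -> P -> 'M[C]_n.+1) (S : X -> 'M[C]_n.+1) : R :=
  \sum_(z : {ffun 'I_N -> bool * X})
   \sum_(s : {ffun 'I_N -> bool})
     ((\prod_(j < N) p (z j)) * (2 ^- N)) *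
     sup [set r | exists theta M, Theta theta /\ binPOVM M /\
        r = \sum_(j < N) (if s j then 1 else -1) *
              loss M (rho_enc (Uprod Ul theta) (S (z j).2)) (z j).1
              / Num.sqrt (N%:R)].

Definition Ekappa2 (n : nat) (X : finType) (p : bool * X -> R)
  (S : X -> 'M[C]_n.+1) : 'M[C]_n.+1 :=
  \sum_(x : X) cR (marginal p x) *: (kappa (S x) *m kappa (S x)).

End QDefs.

From HB Require Import structures.
From mathcomp Require Import all_boot all_order all_algebra.
From mathcomp Require Import complex.
From mathcomp Require Import boolp classical_sets reals.
From mathcomp Require Import sesquilinear spectral.
From mathcomp Require Import ring lra.

(* Put A := U^* M_0 U, so 0 <= A <= 1; since M_1 = 1 - M_0, the signed empirical
   loss is a term independent of (theta, M) plus Re tr (A K), where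
   K = sum_j sigma_j (-1)^(c_j + 1) kappa(x_j).  Expanding the trace in an
   orthonormal eigenbasis (u_k, d_k) of B, AM-GM with weights t_k > 0 and
   |A u_k| <= 1 give Re tr (A K) <= sum_k (t_k + |K u_k|^2 / t_k) / 2 uniformly in
   (theta, M).  Averaging over the signs kills the first term and the cross terms of
   |K u_k|^2, leaving N <u_k, E[kappa^2] u_k> = N d_k^2; taking t_k close to
   sqrt N d_k bounds the Rademacher complexity by sum_k d_k = Tr B. *)

Set Implicit Arguments. Unset Strict Implicit. Unset Printing Implicit Defensive.
Import Order.TTheory GRing.Theory Num.Theory.
Local Open Scope ring_scope.

Section Adjoint.
Variable R : realType.
Local Notation C := R[i].

Lemma cRM (a b : R) : cR (a * b) = cR a * cR b.
Proof. by apply/eqP; rewrite eq_complex /= !mul0r mulr0 subr0 addr0 !eqxx. Qed.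

Lemma conjc_cR (r : R) : conjc (cR r) = cR r.
Proof. by rewrite /cR /= oppr0. Qed.

Lemma Re_cRM (r : R) (x : C) : complex.Re (cR r * x) = r * complex.Re x.
Proof. by case: x => a b /=; rewrite mul0r subr0. Qed.

Lemma Re_ge0 (x : C) : 0 <= x -> 0 <= complex.Re x.
Proof. by rewrite lecE => /andP[]. Qed.

Lemma adj_mxE m k (A : 'M[C]_(m, k)) i j : adj A i j = conjc (A j i).
Proof. by rewrite !mxE. Qed.

Lemma adjK m k (A : 'M[C]_(m, k)) : adj (adj A) = A.
Proof. by apply/matrixP => i j; rewrite !adj_mxE conjcK. Qed.

Lemma adj_mul m k l (A : 'M[C]_(m, k)) (B : 'M[C]_(k, l)) :
  adj (A *m B) = adj B *m adj A.
Proof. by rewrite /adj map_mxM trmx_mul. Qed.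

Lemma adjZ m k (c : C) (A : 'M[C]_(m, k)) : adj (c *: A) = conjc c *: adj A.
Proof. by apply/matrixP => i j; rewrite !mxE rmorphM. Qed.

Lemma adj1 m : adj (1%:M : 'M[C]_m) = 1%:M.
Proof. by apply/matrixP => i j; rewrite !mxE eq_sym rmorph_nat. Qed.

Lemma adj_is_zmod_morphism m k : zmod_morphism (@adj R m k).
Proof. by move=> A B; apply/matrixP => i j; rewrite !mxE rmorphB. Qed.

HB.instance Definition _ m k :=
  GRing.isZmodMorphism.Build 'M[C]_(m, k) 'M[C]_(k, m) (@adj R m k)
    (@adj_is_zmod_morphism m k).

Lemma map_conj_trmx m k (A : 'M[C]_(m, k)) : map_mx Num.conj A^T = adj A.
Proof. by apply/matrixP => i j; rewrite !mxE. Qed.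

Lemma unitary1 m : unitary (1%:M : 'M[C]_m).
Proof. by split; rewrite adj1 mulmx1. Qed.

Lemma unitary_mul m (U V : 'M[C]_m) : unitary U -> unitary V -> unitary (U *m V).
Proof.
move=> [UtU UUt] [VtV VVt]; rewrite /unitary adj_mul; split.
  by rewrite mulmxA -(mulmxA (adj V)) UtU mulmx1 VtV.
by rewrite mulmxA -(mulmxA U) VVt mulmx1 UUt.
Qed.

End Adjoint.

Section PositiveSemidefinite.
Variables (R : realType) (m : nat).
Local Notation C := R[i].
Implicit Types (A Q : 'M[C]_m) (x y u : 'cV[C]_m).

Lemma psd1 : psd (1%:M : 'M[C]_m).
Proof.
split=> [|v]; first exact: adj1.
rewrite mulmx1 mxE; apply: sumr_ge0 => i _.
by rewrite adj_mxE mulrC mulcJ_ge0.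
Qed.

Lemma psd_congr k Q (U : 'M[C]_(m, k)) : psd Q -> psd (adj U *m Q *m U).
Proof.
move=> [Qh Qpos]; split=> [|v]; first by rewrite !adj_mul adjK Qh mulmxA.
by have := Qpos (U *m v); rewrite adj_mul !mulmxA.
Qed.

(* The nonnegativity of the form at [t x - y]. *)
Lemma psd_amgm Q x y (t : R) : psd Q ->
  2 * t * complex.Re ((adj x *m Q *m y) 0 0) <=
  t ^+ 2 * complex.Re ((adj x *m Q *m x) 0 0) + complex.Re ((adj y *m Q *m y) 0 0).
Proof.
move=> [Qh /(_ (cR t *: x - y)) /Re_ge0].
have Qyx : (adj y *m Q *m x) 0 0 = conjc ((adj x *m Q *m y) 0 0).
  by rewrite -adj_mxE !adj_mul adjK Qh mulmxA.
rewrite [adj (_ - _)]raddfB /= adjZ conjc_cR !(mulmxBl, mulmxBr).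
rewrite -!scalemxAl -!scalemxAr; move: Qyx.
move: (adj x *m Q *m x) (adj x *m Q *m y) (adj y *m Q *m x) (adj y *m Q *m y).
move=> xx xy yx yy Qyx; rewrite !mxE Qyx !raddfB /= mulrA -cRM !Re_cRM.
case: (xy 0 0) => a b /=; move: (complex.Re _) (complex.Re _) => qx qy.
nra.
Qed.

Lemma psd_le1 A u : psd (1%:M - A) ->
  complex.Re ((adj u *m A *m u) 0 0) <= complex.Re ((adj u *m u) 0 0).
Proof.
case=> _ /(_ u) /Re_ge0; rewrite mulmxBr mulmx1 mulmxBl.
by move: (adj u *m u) (adj u *m A *m u) => a b; rewrite !mxE raddfB subr_ge0.
Qed.

(* [2 |Au|^2 = 2 <u, A (Au)> <= <u, A u> + <Au, A (Au)> <= |u|^2 + |Au|^2]. *)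
Lemma psd_contraction A u : psd A -> psd (1%:M - A) ->
  complex.Re ((adj (A *m u) *m (A *m u)) 0 0) <= complex.Re ((adj u *m u) 0 0).
Proof.
move=> psdA psd1A; have Ah : adj A = A by case: psdA.
have := psd_amgm u (A *m u) 1 psdA; have := psd_le1 (A *m u) psd1A.
have := psd_le1 u psd1A; rewrite adj_mul Ah -!mulmxA expr1n mul1r mulr1.
by move: (complex.Re _) (complex.Re _) (complex.Re _) (complex.Re _) => *; lra.
Qed.

Lemma mxtrace_resolution (I : finType) (u : I -> 'cV[C]_m) (Y : 'M[C]_m) :
  \sum_k u k *m adj (u k) = 1%:M ->
  \tr Y = \sum_k (adj (u k) *m Y *m u k) 0 0.
Proof.
move=> sum_u; rewrite -{1}[Y]mulmx1 -sum_u mulmx_sumr raddf_sum /=.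
by apply: eq_bigr => k _; rewrite mulmxA mxtrace_mulC mulmxA trace_mx11.
Qed.

(* Testing [Re tr (A K)] against an orthonormal basis, each term is bounded by
   AM-GM with weight [t k], and [|A u| <= 1] since [0 <= A <= 1]. *)
Lemma Re_mxtrace_contraction_le (I : finType) (u : I -> 'cV[C]_m) (t : I -> R)
    A (K : 'M[C]_m) :
  \sum_k u k *m adj (u k) = 1%:M -> (forall k, (adj (u k) *m u k) 0 0 = 1) ->
  (forall k, 0 < t k) -> psd A -> psd (1%:M - A) ->
  complex.Re (\tr (A *m K)) <=
  \sum_k (t k + complex.Re ((adj (K *m u k) *m (K *m u k)) 0 0) / t k) / 2.
Proof.
move=> sum_u u_norm t_gt0 psdA psd1A; have Ah : adj A = A by case: psdA.
rewrite (mxtrace_resolution _ sum_u) raddf_sum; apply: ler_sum => k _.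
have := psd_contraction (u k) psdA psd1A; rewrite u_norm.
have := psd_amgm (A *m u k) (K *m u k) (t k) psd1; rewrite !mulmx1.
rewrite [adj (A *m _)]adj_mul Ah !mulmxA /=.
move: (complex.Re _) (complex.Re _) (complex.Re _) => q a b amgm contr.
have tk := t_gt0 k; have ta : t k ^+ 2 * a <= t k ^+ 2 by rewrite ler_piMr ?sqr_ge0.
rewrite ler_pdivlMr // -(ler_pM2r tk) mulrDl divfK ?gt_eqF //; nra.
Qed.

End PositiveSemidefinite.

Section SpectralBasis.
Variables (R : realType) (m : nat) (B : 'M[R[i]]_m).

Definition eigvec (k : 'I_m) : 'cV[R[i]]_m := col k (adj (spectralmx B)).
Definition eigval (k : 'I_m) : R := complex.Re (spectral_diag B 0 k).

Lemma spectralmx_unitary :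
  spectralmx B *m adj (spectralmx B) = 1%:M.
Proof. by have /unitarymxP := spectral_unitarymx B; rewrite map_conj_trmx. Qed.

Lemma sum_eigvec : \sum_k eigvec k *m adj (eigvec k) = 1%:M.
Proof.
rewrite -(mulmx1C spectralmx_unitary); apply/matrixP => i j.
rewrite summxE !mxE; apply: eq_bigr => k _.
by rewrite !mxE big_ord1 !mxE conjcK.
Qed.

Lemma eigvec_norm k : (adj (eigvec k) *m eigvec k) 0 0 = 1.
Proof.
have /matrixP/(_ k k) := spectralmx_unitary; rewrite !mxE eqxx mulr1n => <-.
by apply: eq_bigr => l _; rewrite !mxE conjcK.
Qed.

Hypothesis psdB : psd B.

Lemma mul_spectral_eigvec k : B *m eigvec k = spectral_diag B 0 k *: eigvec k.
Proof.
have normalB : B \is normalmx.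
  by case: psdB => Bh _; apply/normalmxP; rewrite map_conj_trmx Bh.
have /orthomx_spectralP Bdiag := normalB.
rewrite invmx_unitary ?spectral_unitarymx // map_conj_trmx in Bdiag.
have -> : B *m eigvec k = col k (B *m adj (spectralmx B)).
  by rewrite /eigvec !colE mulmxA.
rewrite {1}Bdiag -(mulmxA _ (spectralmx B)) spectralmx_unitary mulmx1.
by rewrite mul_mx_diag; apply/matrixP => i j; rewrite !mxE mulrC.
Qed.

Lemma spectral_diag_ge0 k : 0 <= spectral_diag B 0 k.
Proof.
case: psdB => _ /(_ (eigvec k)).
by rewrite -mulmxA mul_spectral_eigvec -scalemxAr mxE eigvec_norm mulr1.
Qed.

Lemma eigval_ge0 k : 0 <= eigval k.
Proof. exact/Re_ge0/spectral_diag_ge0. Qed.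

Lemma mul_eigvec k : B *m eigvec k = cR (eigval k) *: eigvec k.
Proof.
rewrite mul_spectral_eigvec /eigval; congr (_ *: _).
have := spectral_diag_ge0 k; rewrite lecE /= => /andP[/eqP Im0 _].
by case: (spectral_diag B 0 k) Im0 => a b /= ->.
Qed.

Lemma Re_mxtrace_eigval : complex.Re (\tr B) = \sum_k eigval k.
Proof.
rewrite (mxtrace_resolution _ sum_eigvec) raddf_sum; apply: eq_bigr => k _.
rewrite -mulmxA mul_eigvec -scalemxAr.
have := eigvec_norm k; move: (adj (eigvec k) *m eigvec k) => w w1.
by rewrite mxE w1 mulr1.
Qed.

Lemma Re_eigvec_sqr k :
  complex.Re ((adj (eigvec k) *m (B *m B) *m eigvec k) 0 0) = eigval k ^+ 2.
Proof.
rewrite -!mulmxA !mul_eigvec -!scalemxAr mul_eigvec -!scalemxAr.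
have := eigvec_norm k; move: (adj (eigvec k) *m eigvec k) => w w1.
by rewrite !mxE w1 mulr1 -cRM expr2.
Qed.

End SpectralBasis.

Section SignAverage.
Variables (R : numFieldType) (N : nat).
Local Notation signs := {ffun 'I_N -> bool}.
Implicit Types (s : signs) (j : 'I_N).

Definition sign (b : bool) : R := if b then 1 else -1.

Lemma sign_sqr b : sign b * sign b = 1.
Proof. by case: b; rewrite /sign ?mulr1 ?mulrNN ?mulr1. Qed.

Definition flip j s : signs := [ffun i => (i == j) (+) s i].

Lemma flipK j : involutive (flip j).
Proof. by move=> s; apply/ffunP => i; rewrite !ffunE addbA addbb. Qed.

Lemma sum_flip_odd (F : signs -> R) j :
  (forall s, F (flip j s) = - F s) -> \sum_s F s = 0.
Proof.
move=> Fodd; have : \sum_s F s = - \sum_s F s.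
  by rewrite {1}(reindex_inj (can_inj (flipK j))) -sumrN; apply: eq_bigr.
by move/eqP; rewrite -addr_eq0 -mulr2n mulrn_eq0 /= => /eqP.
Qed.

Lemma sign_flip j s i : sign (flip j s i) = (if i == j then - sign (s i) else sign (s i)).
Proof. by rewrite ffunE; case: (i == j) (s i) => -[]; rewrite /sign ?opprK. Qed.

Lemma sum_signs_cst (c : R) : \sum_(s : signs) c = c * 2 ^+ N.
Proof.
by rewrite sumr_const card_ffun card_bool card_ord -[c *+ _]mulr_natr natrX.
Qed.

Lemma sum_sign j : \sum_(s : signs) sign (s j) = 0.
Proof.
by apply: (@sum_flip_odd (fun s => sign (s j)) j) => s; rewrite sign_flip eqxx.
Qed.

Lemma sum_sign_mul j j' :
  \sum_(s : signs) sign (s j) * sign (s j') = (j == j')%:R * 2 ^+ N.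
Proof.
have [<-|neq] := eqVneq j j'.
  by rewrite (eq_bigr (fun=> 1)) => [|s _]; rewrite ?sum_signs_cst ?sign_sqr.
rewrite mul0r; apply: (@sum_flip_odd (fun s => sign (s j) * sign (s j')) j) => s.
by rewrite !sign_flip eqxx eq_sym (negbTE neq) mulNr.
Qed.

End SignAverage.

Section SampleMean.
Variables (R : numFieldType) (N : nat) (Y : finType) (p : Y -> R).
Hypothesis p_ge0 : forall y, 0 <= p y.
Hypothesis p_sum1 : \sum_y p y = 1.
Local Notation samples := {ffun 'I_N -> Y}.
Local Notation signs := {ffun 'I_N -> bool}.
Implicit Types (F G : samples -> signs -> R).

(* Expectation over i.i.d. samples [z ~ p^N] and independent uniform signs. *)
Definition mean F : R :=
  \sum_(z : samples) \sum_(s : signs) ((\prod_j p (z j)) * 2 ^- N) * F z s.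

Lemma eq_mean F G : (forall z s, F z s = G z s) -> mean F = mean G.
Proof. by move=> FG; apply: eq_bigr => z _; apply: eq_bigr => s _; rewrite FG. Qed.

Lemma mean_le F G : (forall z s, F z s <= G z s) -> mean F <= mean G.
Proof.
move=> FG; apply: ler_sum => z _; apply: ler_sum => s _; apply: ler_wpM2l => //.
by rewrite mulr_ge0 ?invr_ge0 ?exprn_ge0 ?prodr_ge0.
Qed.

Lemma meanD F G : mean (fun z s => F z s + G z s) = mean F + mean G.
Proof.
rewrite -big_split; apply: eq_bigr => z _; rewrite -big_split.
by apply: eq_bigr => s _; rewrite mulrDr.
Qed.

Lemma meanZ F c : mean (fun z s => F z s * c) = mean F * c.
Proof.
rewrite mulr_suml; apply: eq_bigr => z _; rewrite mulr_suml.
by apply: eq_bigr => s _; rewrite mulrA.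
Qed.

Lemma mean_sum (I : finType) (F : I -> samples -> signs -> R) :
  mean (fun z s => \sum_i F i z s) = \sum_i mean (F i).
Proof.
rewrite exchange_big; apply: eq_bigr => z _; rewrite exchange_big.
by apply: eq_bigr => s _; rewrite mulr_sumr.
Qed.

Lemma mean_signless (F : samples -> R) :
  mean (fun z _ => F z) = \sum_(z : samples) (\prod_j p (z j)) * F z.
Proof.
by apply: eq_bigr => z _; rewrite sum_signs_cst mulrAC divfK ?expf_neq0 ?pnatr_eq0.
Qed.

Lemma mean_coord (f : Y -> R) i :
  mean (fun z _ => f (z i)) = \sum_y p y * f y.
Proof.
rewrite mean_signless.
pose g j y := if j == i then p y * f y else p y.
transitivity (\sum_(z : samples) \prod_j g j (z j)).
  apply: eq_bigr => z _; rewrite (bigD1 i) //= [RHS](bigD1 i) //= /g eqxx.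
  by rewrite mulrAC; congr (_ * _); apply: eq_bigr => j /negbTE ->.
rewrite -bigA_distr_bigA (bigD1 i) //= /g eqxx [X in _ * X]big1 ?mulr1 //.
by move=> j /negbTE ->.
Qed.

Lemma mean_cst c : mean (fun _ _ => c) = c.
Proof.
rewrite mean_signless -mulr_suml -(bigA_distr_bigA (fun=> p)) /=.
by rewrite big1 ?mul1r // => j _; exact: p_sum1.
Qed.

Lemma mean_sign (F : samples -> R) j : mean (fun z s => sign R (s j) * F z) = 0.
Proof.
apply: big1 => z _ /=; under eq_bigr => s _ do rewrite mulrCA.
by rewrite -mulr_suml sum_sign mul0r.
Qed.

Lemma mean_sign_mul (F : samples -> R) j j' :
  mean (fun z s => sign R (s j) * sign R (s j') * F z) =
  (j == j')%:R * mean (fun z _ => F z).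
Proof.
rewrite mulrC -meanZ; apply: eq_bigr => z _ /=; rewrite sum_signs_cst.
under eq_bigr => s _ do rewrite mulrCA.
by rewrite -mulr_suml sum_sign_mul; ring.
Qed.

End SampleMean.

Section Loss.
Variables (R : realType) (n : nat).
Local Notation C := R[i].

Lemma binPOVM_true (M : bool -> 'M[C]_n.+1) :
  binPOVM M -> M true = 1%:M - M false.
Proof. by case=> _ [_ <-]; rewrite addrC addKr. Qed.

Lemma binPOVM_trivial : binPOVM (fun b => if b then 0 else 1%:M : 'M[C]_n.+1).
Proof.
split; first exact: psd1.
split; last by rewrite addr0.
by split=> [|v] /=; [rewrite raddf0 | rewrite mulmx0 mul0mx mxE].
Qed.

Lemma unitary_Uprod L (P : Type) (Ul : 'I_L -> P -> 'M[C]_n.+1) theta :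
  (forall l th, unitary (Ul l th)) -> unitary (Uprod Ul theta).
Proof.
by move=> Ul_unitary; apply: big_ind => //; [exact: unitary1 | exact: unitary_mul].
Qed.

Lemma adj_kappa (W : 'M[C]_n.+1) : adj (kappa W) = kappa W.
Proof. by rewrite /kappa /proj0 !adj_mul !adjK !mulmxA. Qed.

Definition loss_bias (c : bool) (W : 'M[C]_n.+1) : R :=
  if c then 1 - complex.Re (\tr (kappa W)) else 1.

(* Since [M_1 = 1 - M_0], the loss is affine in [A := U^* M_0 U]. *)
Lemma lossE (U W : 'M[C]_n.+1) (M : bool -> 'M[C]_n.+1) c :
  unitary U -> binPOVM M ->
  loss M (rho_enc U W) c =
  loss_bias c W + sign R c * complex.Re (\tr (adj U *m M false *m U *m kappa W)).
Proof.
move=> [UtU _] MP.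
have trE X : \tr (X *m rho_enc U W) = \tr (adj U *m X *m U *m kappa W).
  by rewrite /rho_enc !mulmxA mxtrace_mulC !mulmxA.
rewrite /loss trE; case: c => /=; last by rewrite raddfB /sign mulN1r.
rewrite (binPOVM_true MP) mulmxBr mulmxBl mulmx1 UtU mulmxBl mul1mx linearB.
by rewrite !raddfB /sign mul1r /= opprK addrA.
Qed.

End Loss.

Section SampleBound.
Variables (R : realType) (n N : nat) (X : finType) (S : X -> 'M[R[i]]_n.+1).
Variable u : 'I_n.+1 -> 'cV[R[i]]_n.+1.
Hypothesis sum_u : \sum_k u k *m adj (u k) = 1%:M.
Hypothesis u_norm : forall k, (adj (u k) *m u k) 0 0 = 1.
Variable t : 'I_n.+1 -> R.
Hypothesis t_gt0 : forall k, 0 < t k.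
Local Notation samples := {ffun 'I_N -> bool * X}.
Local Notation signs := {ffun 'I_N -> bool}.
Implicit Types (z : samples) (s : signs).

Definition signed_kappa z s : 'M[R[i]]_n.+1 :=
  \sum_j cR (sign R (s j) * sign R (z j).1) *: kappa (S (z j).2).

Definition sample_bound z s : R :=
  \sum_j sign R (s j) * loss_bias (z j).1 (S (z j).2) +
  \sum_k (t k + complex.Re ((adj (signed_kappa z s *m u k) *m
                             (signed_kappa z s *m u k)) 0 0) / t k) / 2.

Lemma sum_sign_loss_le z s U M : unitary U -> binPOVM M ->
  \sum_j sign R (s j) * loss M (rho_enc U (S (z j).2)) (z j).1 <= sample_bound z s.
Proof.
move=> Uu MP; have [psdM0 [psdM1 _]] := MP.
under eq_bigr => j _ do rewrite (lossE _ _ Uu MP) mulrDr mulrA.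
rewrite big_split lerD2l; set A := adj U *m M false *m U.
have -> : \sum_j sign R (s j) * sign R (z j).1 *
    complex.Re (\tr (A *m kappa (S (z j).2))) = complex.Re (\tr (A *m signed_kappa z s)).
  rewrite /signed_kappa mulmx_sumr [\tr _]raddf_sum raddf_sum /=.
  apply: eq_bigr => j _.
  by rewrite -scalemxAr mxtraceZ Re_cRM.
apply: Re_mxtrace_contraction_le => //; first exact: psd_congr.
have -> : 1%:M - A = adj U *m M true *m U.
  by rewrite (binPOVM_true MP) mulmxBr mulmxBl mulmx1 (proj1 Uu).
exact: psd_congr.
Qed.

Lemma signed_kappa_sqr z s k :
  complex.Re ((adj (signed_kappa z s *m u k) *m (signed_kappa z s *m u k)) 0 0) =
  \sum_i \sum_j sign R (s i) * sign R (s j) *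
    (sign R (z i).1 * sign R (z j).1 *
     complex.Re ((adj (kappa (S (z i).2) *m u k) *m (kappa (S (z j).2) *m u k)) 0 0)).
Proof.
rewrite /signed_kappa mulmx_suml [adj _]raddf_sum /= mulmx_suml summxE raddf_sum /=.
apply: eq_bigr => i _; rewrite mulmx_sumr summxE raddf_sum /=; apply: eq_bigr => j _.
rewrite -!scalemxAl adjZ conjc_cR -scalemxAl -scalemxAr scalerA -cRM mxE Re_cRM.
ring.
Qed.

Lemma sum_kappa_sqr (p : bool * X -> R) k :
  \sum_y p y * complex.Re ((adj (kappa (S y.2) *m u k) *m (kappa (S y.2) *m u k)) 0 0) =
  complex.Re ((adj (u k) *m Ekappa2 p S *m u k) 0 0).
Proof.
pose f (y : bool * X) :=
  complex.Re ((adj (kappa (S y.2) *m u k) *m (kappa (S y.2) *m u k)) 0 0).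
transitivity (\sum_c \sum_x p (c, x) * f (c, x)).
  by rewrite pair_big; apply: eq_bigr => -[c x].
rewrite big_bool /= -big_split /= /Ekappa2 mulmx_sumr mulmx_suml.
rewrite summxE raddf_sum /=; apply: eq_bigr => x _.
rewrite -scalemxAr -scalemxAl mxE Re_cRM /marginal /f adj_mul adj_kappa !mulmxA.
ring.
Qed.

Lemma mean_signed_kappa_sqr (p : bool * X -> R) k : \sum_y p y = 1 ->
  mean p (fun z s =>
    complex.Re ((adj (signed_kappa z s *m u k) *m (signed_kappa z s *m u k)) 0 0)) =
  N%:R * complex.Re ((adj (u k) *m Ekappa2 p S *m u k) 0 0).
Proof.
move=> p_sum1; under eq_mean => z s do rewrite signed_kappa_sqr.
rewrite mean_sum.
rewrite -sum_kappa_sqr mulr_natl -[N in _ *+ N]card_ord -sumr_const.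
apply: eq_bigr => i _.
rewrite mean_sum (bigD1 i) //= big1 ?addr0 => [|j ji]; last first.
  by rewrite mean_sign_mul eq_sym (negbTE ji) mul0r.
rewrite mean_sign_mul eqxx mul1r.
under eq_mean => z s do rewrite sign_sqr mul1r.
exact: (mean_coord p_sum1 (fun y =>
  complex.Re ((adj (kappa (S y.2) *m u k) *m (kappa (S y.2) *m u k)) 0 0))).
Qed.

Lemma mean_sample_bound (p : bool * X -> R) : \sum_y p y = 1 ->
  mean p sample_bound =
  \sum_k (t k + N%:R * complex.Re ((adj (u k) *m Ekappa2 p S *m u k) 0 0) / t k) / 2.
Proof.
move=> p_sum1; rewrite /sample_bound meanD mean_sum big1 ?add0r => [|j _]; last first.
  exact: mean_sign.
rewrite mean_sum; apply: eq_bigr => k _.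
by rewrite meanZ meanD (mean_cst _ p_sum1) meanZ mean_signed_kappa_sqr.
Qed.

End SampleBound.

Lemma amgm_optimal (R : rcfType) (N : nat) (d e : R) : 0 <= d -> 0 < e ->
  exists t : R, 0 < t /\ (t + N%:R * d ^+ 2 / t) / 2 / Num.sqrt N%:R <= d + e.
Proof.
move=> d_ge0 e_gt0; have de_gt0 : 0 < d + e by rewrite ltr_wpDl.
have [->|N_gt0] := posnP N.
  by exists 1; rewrite ltr01 sqrtr0 invr0 mulr0 ltW.
set s := Num.sqrt N%:R; have s_gt0 : 0 < s by rewrite sqrtr_gt0 ltr0n.
have sN : N%:R = s ^+ 2 by rewrite sqr_sqrtr ?ler0n.
exists (s * (d + e)); split; first exact: mulr_gt0.
have -> : (s * (d + e) + N%:R * d ^+ 2 / (s * (d + e))) / 2 / s =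
    (d + e + d ^+ 2 / (d + e)) / 2.
  by rewrite sN; field; rewrite !gt_eqF.
have : d ^+ 2 / (d + e) <= d + e by rewrite ler_pdivrMr //; nra.
lra.
Qed.

Section Rademacher.
Variables (R : realType) (n L N : nat) (P : Type) (X : finType).
Variables (p : bool * X -> R) (Theta : set ('I_L -> P)).
Variables (Ul : 'I_L -> P -> 'M[R[i]]_n.+1) (S : X -> 'M[R[i]]_n.+1).
Hypothesis Ul_unitary : forall l th, unitary (Ul l th).
Local Notation samples := {ffun 'I_N -> bool * X}.
Local Notation signs := {ffun 'I_N -> bool}.

Definition loss_sup (z : samples) (s : signs) : R :=
  sup [set r | exists theta M, Theta theta /\ binPOVM M /\
        r = \sum_(j < N) (if s j then 1 else -1) *
              loss M (rho_enc (Uprod Ul theta) (S (z j).2)) (z j).1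
              / Num.sqrt (N%:R)].

Lemma rademacherE : rademacher N p Theta Ul S = mean p loss_sup.
Proof. by []. Qed.

Lemma loss_sup_empty z s : ~ (exists theta, Theta theta) -> loss_sup z s = 0.
Proof.
move=> Theta0; rewrite /loss_sup -[RHS]sup0; congr sup.
by apply/seteqP; split=> r // [th [M [Theta_th _]]]; apply: Theta0; exists th.
Qed.

Lemma loss_sup_le (u : 'I_n.+1 -> 'cV[R[i]]_n.+1) (t : 'I_n.+1 -> R) z s :
  \sum_k u k *m adj (u k) = 1%:M -> (forall k, (adj (u k) *m u k) 0 0 = 1) ->
  (forall k, 0 < t k) -> (exists theta, Theta theta) ->
  loss_sup z s <= sample_bound S u t z s / Num.sqrt N%:R.
Proof.
move=> sum_u u_norm t_gt0 [th0 Theta_th0]; apply: ge_sup.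
  by eexists; exists th0, (fun b => if b then 0 else 1%:M); split; last split;
    [exact: Theta_th0 | exact: binPOVM_trivial |].
move=> _ [th [M [_ [MP ->]]]]; rewrite -mulr_suml ler_wpM2r ?invr_ge0 ?sqrtr_ge0 //.
by apply: sum_sign_loss_le => //; exact: unitary_Uprod.
Qed.

End Rademacher.

Theorem mainTheorem4 (R : realType) (n L N : nat) (P : Type) (X : finType)
  (p : bool * X -> R) (Theta : set ('I_L -> P))
  (Ul : 'I_L -> P -> 'M[R[i]]_n.+1) (S : X -> 'M[R[i]]_n.+1) :
  is_distr p ->
  (forall l t, unitary (Ul l t)) ->
  (forall x, unitary (S x)) ->
  forall B : 'M[R[i]]_n.+1, psd B -> B *m B = Ekappa2 p S ->
  rademacher N p Theta Ul S <= complex.Re (\tr B).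
Proof.
move=> [p_ge0 p_sum1] Ul_unitary _ B psdB BB.
rewrite rademacherE Re_mxtrace_eigval //.
have [ThetaN0|Theta0] := pselect (exists theta, Theta theta); last first.
  under eq_mean => z s do rewrite loss_sup_empty //.
  by rewrite (mean_cst _ p_sum1) sumr_ge0 // => k _; exact: eigval_ge0.
apply/ler_addgt0Pr => e e_gt0.
have e'_gt0 : 0 < e / n.+1%:R by rewrite divr_gt0 ?ltr0n.
have [t tP] := choice (fun k => amgm_optimal N (eigval_ge0 psdB k) e'_gt0).
apply: (@le_trans _ _
  (mean p (fun z s => sample_bound S (eigvec B) t z s / Num.sqrt N%:R))).
  apply: mean_le => // z s; apply: loss_sup_le => //.
  - exact: sum_eigvec.
  - exact: eigvec_norm.
  - by move=> k; case: (tP k).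
rewrite meanZ mean_sample_bound // mulr_suml.
have -> : \sum_k eigval B k + e = \sum_k (eigval B k + e / n.+1%:R).
  by rewrite big_split sumr_const card_ord -[_ *+ n.+1]mulr_natr divfK ?pnatr_eq0.
apply: ler_sum => k _; rewrite -BB Re_eigvec_sqr //; exact: (tP k).2.
Qed.
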